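(* Let $I=(i_1,\ldots,i_m)$ and $J=(j_1,\ldots,j_m)$ with $i_k,j_k\in\{1,\ldots,n_k\}$. The basis tensor $\mathcal{E}^{IJ}(1)$ is $\mathbb{R}$-Hermitian decomposable if and only if $I-J$ has at most one nonzero entry. Moreover, if $I=J$ then $\operatorname{hrank}_{\mathbb{R}}\mathcal{E}^{IJ}(1)=1$, and if $I$ and $J$ differ in exactly one entry then $\operatorname{hrank}_{\mathbb{R}}\mathcal{E}^{IJ}(1)=2$.
   Context: For vectors $v_i$, $[v_1,\ldots,v_m]_{\otimes h}:=v_1\otimes\cdots\otimes v_m\otimes\overline{v_1}\otimes\cdots\otimes\overline{v_m}$. $\mathcal{E}^{IJ}(1)\in\mathbb{R}^{n_1\times\cdots\times n_m\times n_1\times\cdots\times n_m}$ is the tensor whose entries at positions $(i_1,\ldots,i_m,j_1,\ldots,j_m)$ and $(j_1,\ldots,j_m,i_1,\ldots,i_m)$ equal $1$ and all other entries are $0$. A real tensor $\mathcal{H}$ with $\mathcal{H}_{i_1\ldots i_mj_1\ldots j_m}=\mathcal{H}_{j_1\ldots j_mi_1\ldots i_m}$ is $\mathbb{R}$-Hermitian decomposable if $\mathcal{H}=\sum_{i=1}^r\lambda_i[u_i^1,\ldots,u_i^m]_{\otimes h}$ with $\lambda_i\in\mathbb{R}$ and $u_i^j\in\mathbb{R}^{n_j}$; the smallest such $r$ is $\operatorname{hrank}_{\mathbb{R}}(\mathcal{H})$. *)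

From HB Require Import structures.
From mathcomp Require Import all_boot all_order all_algebra.
Set Implicit Arguments. Unset Strict Implicit. Unset Printing Implicit Defensive.
Import Order.TTheory GRing.Theory Num.Theory.
Local Open Scope ring_scope.

(* A multi-index (i_1,...,i_m) with i_k in {0,...,n_k - 1}. *)
Definition Idx (m : nat) (n : 'I_m -> nat) := {dffun forall k : 'I_m, 'I_(n k)}.

(* A real tensor in R^{n_1 x ... x n_m x n_1 x ... x n_m}, entry H I J. *)
Definition tensor (R : Type) (m : nat) (n : 'I_m -> nat) := Idx n -> Idx n -> R.

(* [v_1,...,v_m]_{\otimes h} over the reals (conjugation is the identity):
   entry at (I,J) is prod_k v_k(i_k) * prod_k v_k(j_k). *)
Definition htensor (R : numDomainType) (m : nat) (n : 'I_m -> nat)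
  (v : forall k : 'I_m, 'I_(n k) -> R) : tensor R n :=
  fun I J => (\prod_(k < m) v k (I k)) * (\prod_(k < m) v k (J k)).

Definition hsym (R : Type) (m : nat) (n : 'I_m -> nat) (H : tensor R n) : Prop :=
  forall I J, H I J = H J I.

Definition hdecomp_len (R : numDomainType) (m : nat) (n : 'I_m -> nat)
  (H : tensor R n) (r : nat) : Prop :=
  exists (lambda : 'I_r -> R) (u : 'I_r -> forall k : 'I_m, 'I_(n k) -> R),
    forall I J, H I J = \sum_(i < r) lambda i * htensor (u i) I J.

Definition hdecomposable (R : numDomainType) (m : nat) (n : 'I_m -> nat)
  (H : tensor R n) : Prop :=
  hsym H /\ exists r, hdecomp_len H r.

Definition hrank_eq (R : numDomainType) (m : nat) (n : 'I_m -> nat)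
  (H : tensor R n) (r : nat) : Prop :=
  hdecomposable H /\ hdecomp_len H r /\ (forall r', hdecomp_len H r' -> (r <= r')%N).

Definition basisE (R : numDomainType) (m : nat) (n : 'I_m -> nat)
  (I J : Idx n) : tensor R n :=
  fun K L => if ((K == I) && (L == J)) || ((K == J) && (L == I)) then 1 else 0.

(* Number of positions where I and J differ (nonzero entries of I - J). *)
Definition ndiff (m : nat) (n : 'I_m -> nat) (I J : Idx n) : nat :=
  #|[set k : 'I_m | I k != J k]|.

(* Every tensor [u_1,...,u_m]_{\otimes h} has (I,J)-entry prod_k u_k(i_k) u_k(j_k), which is
   unchanged when i_k and j_k are exchanged in any set of coordinates; hence so is every
   R-Hermitian decomposable tensor.  If I and J differ in two coordinates p and q, exchanging
   coordinate p alone moves the entry 1 of E^{IJ}(1) at (I,J) to a position where it is 0, so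
   E^{IJ}(1) is not decomposable.  Conversely E^{II}(1) = [e_{i_1},...,e_{i_m}]_{\otimes h}, and
   if I, J differ only at p then E^{IJ}(1) = 1/2 [x_+]_{\otimes h} - 1/2 [x_-]_{\otimes h}, where
   x_± agrees with e_I except for e_{i_p} ± e_{j_p} in slot p.  Rank 1 is impossible there because
   a rank-one tensor satisfies H_{IJ}^2 = H_{II} H_{JJ}, while E_{IJ} = 1 and E_{II} = 0. *)
From HB Require Import structures.
From mathcomp Require Import all_boot all_order all_algebra.
From mathcomp Require Import ring.
Import Order.TTheory GRing.Theory Num.Theory.
Local Open Scope ring_scope.
Set Implicit Arguments. Unset Strict Implicit.

Section HermitianTensors.
Variables (R : numDomainType) (m : nat) (n : 'I_m -> nat).
Implicit Types (I J K L : Idx n) (H : tensor R n).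

Definition idx_mix (A : {set 'I_m}) I J : Idx n :=
  finfun (fun k => if k \in A then J k else I k).

Lemma htensor_mix (u : forall k : 'I_m, 'I_(n k) -> R) A I J :
  htensor u (idx_mix A I J) (idx_mix A J I) = htensor u I J.
Proof.
rewrite /htensor -!big_split /=; apply: eq_bigr => k _.
by rewrite !ffunE; case: (k \in A); rewrite // mulrC.
Qed.

Lemma hdecomp_mix H r A I J :
  hdecomp_len H r -> H (idx_mix A I J) (idx_mix A J I) = H I J.
Proof.
by move=> [lambda [u HE]]; rewrite !HE; apply: eq_bigr => i _; rewrite htensor_mix.
Qed.

Lemma hdecomp_len0 H I J : hdecomp_len H 0 -> H I J = 0.
Proof. by move=> [lambda [u ->]]; rewrite big_ord0. Qed.

Lemma hdecomp_len1_sqr H I J : hdecomp_len H 1 -> H I J ^+ 2 = H I I * H J J.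
Proof. by move=> [lambda [u HE]]; rewrite !HE !big_ord1 /htensor; ring. Qed.

Lemma hrank_eq_intro H r :
  hsym H -> hdecomp_len H r -> (forall r', (r' < r)%N -> ~ hdecomp_len H r') ->
  hrank_eq H r.
Proof.
move=> Hsym Hr Hmin; split; first by split; last exists r.
by split=> // r' Hr'; rewrite leqNgt; apply/negP => /Hmin.
Qed.

Definition idx_delta I (k : 'I_m) (x : 'I_(n k)) : R := (x == I k)%:R.
Arguments idx_delta I k x : clear implicits.

Lemma prod_idx_delta I K : \prod_(k < m) idx_delta I k (K k) = (K == I)%:R.
Proof.
have [->|neKI] := eqVneq K I; first by rewrite big1 // => k _; rewrite /idx_delta eqxx.
have [k neKIk] : exists k, K k != I k.
  apply/existsP; apply: contraR neKI; rewrite negb_exists => /forallP eqKI.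
  by apply/eqP/ffunP => k; apply/eqP; have := eqKI k; rewrite negbK.
by rewrite (bigD1 k) //= /idx_delta (negbTE neKIk) mul0r.
Qed.

Lemma htensor_idx_delta I K L :
  htensor (idx_delta I) K L = (K == I)%:R * (L == I)%:R.
Proof. by rewrite /htensor !prod_idx_delta. Qed.

Lemma basisE_sym I J : hsym (basisE R I J).
Proof. by rewrite /hsym /basisE => K L; rewrite orbC andbC (andbC (K == I)). Qed.

Lemma basisE_diag I K L : basisE R I I K L = htensor (idx_delta I) K L.
Proof.
rewrite htensor_idx_delta /basisE orbb.
by case: (K == I); case: (L == I); rewrite ?mulr1 ?mulr0.
Qed.

Lemma basisE_neq I J K L : I != J ->
  basisE R I J K L = (K == I)%:R * (L == J)%:R + (K == J)%:R * (L == I)%:R.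
Proof.
move=> neIJ; rewrite /basisE.
have [->|_] := eqVneq K I; first rewrite (negbTE neIJ).
  by case: (L == J); rewrite /= ?mulr1n ?mulr0n ?mulr1 ?mulr0 ?mul0r ?addr0.
by case: (K == J); case: (L == I); rewrite /= ?mulr1n ?mulr0n ?mulr1 ?mulr0 ?mul0r ?add0r.
Qed.

Lemma hdecomp_basisE_ndiff_le1 I J r : hdecomp_len (basisE R I J) r -> (ndiff I J <= 1)%N.
Proof.
move=> HIJ; rewrite leqNgt; apply/negP => /card_gt1P [p [q [+ + nepq]]].
rewrite !inE => neIJp neIJq.
have := hdecomp_mix [set p] I J HIJ; rewrite /basisE !eqxx /=.
have -> : (idx_mix [set p] I J == I) = false.
  apply/negbTE/eqP => /ffunP /(_ p); rewrite ffunE set11 => /eqP.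
  by rewrite eq_sym (negbTE neIJp).
have -> : (idx_mix [set p] I J == J) = false.
  apply/negbTE/eqP => /ffunP /(_ q); rewrite ffunE in_set1 eq_sym (negbTE nepq) => /eqP.
  by rewrite (negbTE neIJq).
by move/eqP; rewrite eq_sym oner_eq0.
Qed.

Lemma hrank_basisE_diag I : hrank_eq (basisE R I I) 1.
Proof.
apply: hrank_eq_intro; first exact: basisE_sym.
  exists (fun _ => 1), (fun _ => idx_delta I) => K L.
  by rewrite big_ord1 mul1r basisE_diag.
by case=> // _ /(hdecomp_len0 I I) /eqP; rewrite /basisE eqxx /= oner_eq0.
Qed.

End HermitianTensors.
Arguments idx_delta R {m n} I k x.

Section Ndiff.
Variables (m : nat) (n : 'I_m -> nat).
Implicit Types I J : Idx n.

Lemma ndiff_eq0 I J : ndiff I J = 0%N -> I = J.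
Proof.
move/eqP; rewrite cards_eq0 => /eqP /setP eqIJ.
by apply/ffunP => k; apply/eqP; have := eqIJ k; rewrite !inE => /negbFE.
Qed.

Lemma ndiff_eq1 I J : ndiff I J = 1%N ->
  I != J /\ exists p, forall k, k != p -> I k = J k.
Proof.
move=> /eqP /cards1P [p /setP eqD]; split.
  by apply/eqP => eqIJ; have := eqD p; rewrite !inE eqIJ !eqxx.
by exists p => k nekp; apply/eqP; have := eqD k; rewrite !inE (negbTE nekp) => /negbFE.
Qed.

End Ndiff.

Section BasisRankTwo.
Variables (R : numFieldType) (m : nat) (n : 'I_m -> nat) (I J : Idx n) (p : 'I_m).
Hypotheses (neIJ : I != J) (eqIJ : forall k, k != p -> I k = J k).

Definition idx_delta_at (c : R) (k : 'I_m) (x : 'I_(n k)) : R :=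
  idx_delta R I k x + (k == p)%:R * c * idx_delta R J k x.
Arguments idx_delta_at c k x : clear implicits.

Lemma prod_idx_delta_at c (K : Idx n) :
  \prod_(k < m) idx_delta_at c k (K k) = (K == I)%:R + c * (K == J)%:R.
Proof.
have off_p k : k != p -> idx_delta_at c k (K k) = idx_delta R I k (K k).
  by move=> /negbTE nekp; rewrite /idx_delta_at nekp mulr0n !mul0r addr0.
have eqJI : \prod_(k < m | k != p) idx_delta R J k (K k) =
            \prod_(k < m | k != p) idx_delta R I k (K k).
  by apply: eq_bigr => k /eqIJ eqIJk; rewrite /idx_delta eqIJk.
rewrite -(prod_idx_delta R I K) -(prod_idx_delta R J K) (bigD1 p) //.
rewrite [X in _ = X + _](bigD1 p) // [X in _ = _ + _ * X](bigD1 p) //= eqJI.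
rewrite (eq_bigr (fun k => idx_delta R I k (K k)) off_p) /idx_delta_at eqxx.
by rewrite mulr1n mul1r mulrDl mulrA.
Qed.

Lemma hdecomp_basisE_len2 : hdecomp_len (basisE R I J) 2.
Proof.
exists (fun i => (-1) ^+ i / 2), (fun i => idx_delta_at ((-1) ^+ i)) => K L.
rewrite big_ord_recr big_ord1 /= /htensor !prod_idx_delta_at basisE_neq //.
by rewrite expr0 expr1; field.
Qed.

Lemma hrank_basisE_ndiff1 : hrank_eq (basisE R I J) 2.
Proof.
apply: hrank_eq_intro; [exact: basisE_sym | exact: hdecomp_basisE_len2 |].
have E_IJ : basisE R I J I J = 1 by rewrite /basisE !eqxx.
case=> [_ /(hdecomp_len0 I J)|[_ /(hdecomp_len1_sqr I J)|//]]; rewrite E_IJ => /eqP.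
  by rewrite oner_eq0.
by rewrite /basisE !eqxx (negbTE neIJ) /= mul0r expr1n oner_eq0.
Qed.

End BasisRankTwo.

Theorem corollary3p4 (R : realFieldType) (m : nat) (n : 'I_m -> nat) (I J : Idx n) :
  (hdecomposable (basisE R I J) <-> (ndiff I J <= 1)%N) /\
  (I = J -> hrank_eq (basisE R I J) 1) /\
  (ndiff I J = 1%N -> hrank_eq (basisE R I J) 2).
Proof.
have rank2 : ndiff I J = 1%N -> hrank_eq (basisE R I J) 2.
  by move=> /ndiff_eq1 [neIJ [p eqIJ]]; exact: hrank_basisE_ndiff1 neIJ eqIJ.
split; last by split=> // ->; exact: hrank_basisE_diag.
split=> [[_ [r /hdecomp_basisE_ndiff_le1 //]]|].
rewrite leq_eqVlt ltnS leqn0 => /orP [/eqP /rank2 [] //|/eqP /ndiff_eq0 ->].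
by case: (hrank_basisE_diag R J).
Qed.
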